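(* Let $K$ be a field, $S=K[[x_1,\dots,x_n]]$, $E$ the $S$-module described in the context, and fix a term order $\prec$ on $E$. Let $N\subset E$ be an $S$-submodule of finite length. Let $N_0=T_1(N)$, and inductively, as long as $N_{i-1}\neq N$, choose $\xi_i\in N$ with $$\mathrm{LT}_\prec(\xi_i)=\min_\prec\{\mathrm{LT}_\prec(\eta)\mid \eta\in N,\ \mathrm{LT}_\prec(\eta)\notin\mathrm{LT}_\prec(N_{i-1})\},$$ and set $N_i=N_{i-1}+S\xi_i$. Then this yields a finite chain of $S$-modules $T_1(N)=N_0\subset N_1\subset\cdots\subset N_k=N$, and: (1) $N_i/N_{i-1}\cong K$ for all $1\le i\le k$; (2) $\mathrm{LT}_\prec(\xi_1)\prec\mathrm{LT}_\prec(\xi_2)\prec\cdots\prec\mathrm{LT}_\prec(\xi_k)$; (3) each $N_i$ does not depend on the choice of $\xi_i$; (4) $\xi_i$ can be chosen so that no term occurring in $\xi_i$ lies in $\mathrm{LT}_\prec(N_{i-1})$, and such a $\xi_i$ is unique up to multiplication by an element of $K^\times$.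
   Context: $E=K[x_1^{-1},\dots,x_n^{-1}]\cdot\frac{1}{x_1\cdots x_n}$ is the $K$-vector space with basis the terms $\frac{1}{x^{\alpha+1}}=\frac{1}{x_1^{\alpha_1+1}\cdots x_n^{\alpha_n+1}}$, $\alpha\in\mathbb{Z}^n_{\ge0}$, with $S$-module structure $x^{\gamma}\cdot\frac{1}{x^{\beta+1}}=\frac{1}{x^{\beta-\gamma+1}}$ if $\beta-\gamma\in\mathbb{Z}^n_{\ge0}$ and $0$ otherwise, extended bilinearly. A term order on $E$ is a total order $\prec$ on terms such that $\frac{1}{x_1\cdots x_n}\preceq\frac{1}{x^{\alpha+1}}$ for all $\alpha$, and $\frac{1}{x^{\alpha+1}}\prec\frac{1}{x^{\beta+1}}$ implies $\frac{1}{x^{\alpha+\gamma+1}}\prec\frac{1}{x^{\beta+\gamma+1}}$ for all $\alpha,\beta,\gamma$ (such an order is a well-ordering). For $0\neq\eta\in E$, $\mathrm{LT}_\prec(\eta)$ is the $\prec$-largest term occurring in $\eta$ with nonzero coefficient; for a subset $N\subset E$, $\mathrm{LT}_\prec(N)=\{\mathrm{LT}_\prec(\eta)\mid 0\ne\eta\in N\}$. For an $S$-submodule $N\subset E$, $T_1(N)$ denotes the $S$-submodule of $N$ generated by all terms of $E$ that lie in $N$. *)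

From HB Require Import structures.
From mathcomp Require Export all_boot all_order all_algebra.
From mathcomp Require Export mpoly.
Set Implicit Arguments. Unset Strict Implicit. Unset Printing Implicit Defensive.
Import GRing.Theory.
Local Open Scope ring_scope.

Section InverseSystem.
Variables (K : fieldType) (n : nat).

(* E : the K-vector space with basis the terms 1/x^(alpha+1), alpha in N^n.
   We encode the term 1/x^(alpha+1) as the monomial 'X_[alpha], so an element
   of E is a finite K-linear combination of terms, i.e. an element of
   {mpoly K[n]} (the polynomial structure is only used as a finitely
   supported coefficient map; multiplication of mpolys is never used). *)
Definition E := {mpoly K[n]}.

Definition term (a : 'X_{1..n}) : E := 'X_[a].

(* S = K[[x_1,...,x_n]] : formal power series, i.e. arbitrary coefficient
   maps N^n -> K; f g is the coefficient of x^g. *)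
Definition S := 'X_{1..n} -> K.

(* The S-module structure of E:
   x^g . 1/x^(b+1) = 1/x^(b-g+1) if g <= b, 0 otherwise, extended bilinearly
   (for a power series f only the finitely many g <= b contribute). *)
Definition act (f : S) (eta : E) : E :=
  \sum_(m <- msupp eta)
     eta@_m *: \sum_(g : 'X_{1..n < (mdeg m).+1} | (bmnm g <= m)%MM)
                  f (bmnm g) *: term (m - bmnm g)%MM.

Definition subsetE (A B : E -> Prop) := forall x, A x -> B x.
Definition sameE (A B : E -> Prop) := forall x, A x <-> B x.

Definition is_submodule (N : E -> Prop) : Prop :=
  [/\ N 0, (forall a b, N a -> N b -> N (a + b)) &
      (forall (f : S) a, N a -> N (act f a))].

Definition gen (A : E -> Prop) : E -> Prop :=
  fun x => forall M, is_submodule M -> subsetE A M -> M x.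

Definition T1 (N : E -> Prop) : E -> Prop :=
  gen (fun x => N x /\ exists a, x = term a).

Definition addS (M : E -> Prop) (xi : E) : E -> Prop :=
  fun x => exists a (f : S), M a /\ x = a + act f xi.

Definition finite_length (N : E -> Prop) : Prop :=
  exists B : nat, forall (c : nat -> E -> Prop) (k : nat),
    (forall i, (i <= k)%N -> is_submodule (c i) /\ subsetE (c i) N) ->
    (forall i, (i < k)%N -> subsetE (c i) (c i.+1) /\ ~ sameE (c i) (c i.+1)) ->
    (k <= B)%N.

(* Term orders on E: ord a b means 1/x^(a+1) < 1/x^(b+1) (strict). *)
Definition term_order (ord : rel 'X_{1..n}) : Prop :=
  [/\ irreflexive ord, transitive ord,
      (forall a b, a != b -> ord a b || ord b a),
      (forall a, a != 0%MM -> ord 0%MM a) &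
      (forall a b c, ord a b -> ord (a + c)%MM (b + c)%MM)].

Variable ord : rel 'X_{1..n}.

(* Leading term (given by its exponent) of eta; meaningful for eta != 0. *)
Definition LT (eta : E) : 'X_{1..n} :=
  foldr (fun m acc => if ord acc m then m else acc) 0%MM (msupp eta).

Definition LTset (M : E -> Prop) (t : 'X_{1..n}) : Prop :=
  exists eta, [/\ M eta, eta != 0 & LT eta = t].

(* The chain N_0 = T_1(N), N_(i+1) = N_i + S xi_(i+1) for a sequence s of
   choices xi_1, ..., xi_k (stored 0-indexed in s). *)
Fixpoint chain (N : E -> Prop) (s : seq E) (i : nat) : E -> Prop :=
  match i with
  | 0 => T1 N
  | i'.+1 => addS (chain N s i') (nth 0 s i')
  end.

Definition valid_step (N M : E -> Prop) (xi : E) : Prop :=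
  [/\ ~ sameE M N, N xi, xi != 0, ~ LTset M (LT xi) &
      forall eta, N eta -> eta != 0 -> ~ LTset M (LT eta) ->
                  ~~ ord (LT eta) (LT xi)].

Definition valid_run (N : E -> Prop) (s : seq E) : Prop :=
  forall i, (i < size s)%N -> valid_step N (chain N s i) (nth 0 s i).

(* K viewed as the S-module S/m: f . c = f(0) c. An S-isomorphism
   M'/M ~= K is given by an S-linear surjection M' -> K with kernel M. *)
Definition quot_iso_K (M' M : E -> Prop) : Prop :=
  exists phi : E -> K,
    [/\ (forall a b, M' a -> M' b -> phi (a + b) = phi a + phi b),
        (forall (f : S) a, M' a -> phi (act f a) = f 0%MM * phi a),
        (forall c : K, exists a, M' a /\ phi a = c) &
        (forall a, M' a -> (phi a = 0 <-> M a))].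

End InverseSystem.

(* Finite length of N makes the leading terms of its elements well-ordered:
   a strictly descending sequence u_1 > u_2 > ... of leading terms yields the
   strictly increasing chain of submodules {eta in N | all terms of eta <= u_i}.
   So, for a submodule M of N, every element can be reduced modulo M until none
   of its terms lies in LT(M), and an element of N all of whose terms lie below
   the least leading term LT(xi) outside LT(M) already lies in M.  As
   f xi - f(0) xi only has terms below LT(xi), we get M + S xi = M + K xi with
   xi not in M: each quotient is K, the chain grows strictly (hence stops) and
   the leading terms increase.  Two admissible choices xi, xi' have the same
   leading term, so xi' - c xi lies in M for the c cancelling it; this makes
   N_i independent of the choice and, when neither xi nor xi' has a term in
   LT(M), forces xi' = c xi. *)

From mathcomp Require Import ssrcomplements.
From Stdlib Require Import Classical ClassicalEpsilon.
Set Implicit Arguments. Unset Strict Implicit. Unset Printing Implicit Defensive.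
Import GRing.Theory.
Local Open Scope ring_scope.

Lemma bounded_chains_wf (T : Type) (R : T -> T -> Prop) (B : nat) :
  (forall (c : nat -> T) (k : nat),
     (forall i, (i < k)%N -> R (c i.+1) (c i)) -> (k <= B)%N) ->
  well_founded R.
Proof.
move=> bounded u; apply: NNPP => nacc_u.
have descend x : ~ Acc R x -> exists y, R y x /\ ~ Acc R y.
  move=> nacc; apply: NNPP => nex; apply: nacc; constructor=> y Ryx.
  by apply: NNPP => nacc_y; apply: nex; exists y.
pose next x := epsilon (inhabits x) (fun y => R y x /\ ~ Acc R y).
have next_spec x : ~ Acc R x -> R (next x) x /\ ~ Acc R (next x).
  by move=> nacc; apply: (epsilon_spec (inhabits x) _ (descend x nacc)).
pose c i := iter i next u.
have nacc_c i : ~ Acc R (c i) by elim: i => [//|i]; rewrite /c /=; case/next_spec.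
have := bounded c B.+1 (fun i _ => proj1 (next_spec _ (nacc_c i))).
by rewrite ltnn.
Qed.

Section TermOrder.
Variables (K : fieldType) (n : nat) (ord : rel 'X_{1..n}).
Hypothesis ord_term : term_order ord.
Local Notation mono := 'X_{1..n}.
Local Notation P := {mpoly K[n]}.

Definition leo (u v : mono) := (u == v) || ord u v.

Lemma ord_irr u : ~~ ord u u. Proof. by case: ord_term => irr _ _ _ _; rewrite irr. Qed.
Lemma ord_trans u v w : ord u v -> ord v w -> ord u w.
Proof. by case: ord_term => _ tr _ _ _ h1 h2; apply: (tr v u w). Qed.
Lemma ord_total u v : u != v -> ord u v || ord v u.
Proof. by case: ord_term => _ _ tot _ _; apply: tot. Qed.
Lemma ord0m u : u != 0%MM -> ord 0%MM u.
Proof. by case: ord_term => _ _ _ h _; apply: h. Qed.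
Lemma ordDr a b c : ord a b -> ord (a + c)%MM (b + c)%MM.
Proof. by case: ord_term => _ _ _ _ h; apply: h. Qed.

Lemma ord_subm m g : (g <= m)%MM -> g != 0%MM -> ord (m - g)%MM m.
Proof.
move=> le_gm nz_g; have := ordDr (m - g)%MM (ord0m nz_g).
by rewrite add0m addmC submK.
Qed.

Lemma leo_refl u : leo u u. Proof. by rewrite /leo eqxx. Qed.
Lemma ord_leo u v : ord u v -> leo u v. Proof. by move=> h; rewrite /leo h orbT. Qed.
Lemma leo_ord_trans u v w : leo u v -> ord v w -> ord u w.
Proof. by case/orP=> [/eqP->//|h1 h2]; apply: ord_trans h1 h2. Qed.
Lemma ord_leo_trans u v w : ord u v -> leo v w -> ord u w.
Proof. by move=> h1; case/orP=> [/eqP<-//|h2]; apply: ord_trans h1 h2. Qed.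
Lemma leo_trans u v w : leo u v -> leo v w -> leo u w.
Proof. by move=> h1; case/orP=> [/eqP<-//|h2]; apply/ord_leo/(leo_ord_trans h1 h2). Qed.
Lemma leo_total u v : leo u v || ord v u.
Proof. by rewrite /leo; case: (eqVneq u v) => //= ne; apply: ord_total. Qed.
Lemma leoNord u v : leo u v -> ~~ ord v u.
Proof. by move=> h; apply/negP => /(leo_ord_trans h); rewrite (negbTE (ord_irr u)). Qed.
Lemma Nord_leo u v : ~~ ord v u -> leo u v.
Proof. by move=> h; move: (leo_total u v); rewrite (negbTE h) orbF. Qed.
Lemma leo_anti u v : leo u v -> leo v u -> u = v.
Proof. by move=> h; case/orP=> [/eqP->//|h']; move: (leoNord h); rewrite h'. Qed.
Lemma leo_neq u v : leo u v -> u != v -> ord u v.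
Proof. by case/orP=> [/eqP->|//]; rewrite eqxx. Qed.

Lemma LT_max (eta : P) m : m \in msupp eta -> leo m (LT ord eta).
Proof.
rewrite /LT; elim: (msupp eta) => //= x s IH; rewrite in_cons.
case/predU1P=> [->|/IH le_m]; case: ifP => [lt|/negbT nlt] //.
- exact: leo_refl.
- exact: Nord_leo.
- exact/ord_leo/(leo_ord_trans le_m lt).
Qed.

Lemma LT_in_msupp (eta : P) : eta != 0 -> LT ord eta \in msupp eta.
Proof.
move=> nz_eta; have : msupp eta != [::] by rewrite msupp_eq0.
case Es: (msupp eta) => [//|x s] _; rewrite -Es.
have x_in : x \in msupp eta by rewrite Es mem_head.
have : LT ord eta \in 0%MM :: msupp eta.
  rewrite /LT; elim: (msupp eta) => [|y r IH] /=; first exact: mem_head.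
  case: ifP => _; rewrite !inE ?eqxx ?orbT //.
  by move: IH; rewrite !inE => /orP[->|->]; rewrite ?orbT.
(* The fold is seeded with 0%MM; if it returns this least term, then every term
   of the support is 0%MM. *)
case/predU1P=> [LT0|//]; have := LT_max x_in; rewrite LT0.
case: (eqVneq x 0%MM) => [x0|nz_x] le_x0; first by rewrite -x0.
by move: (leoNord le_x0); rewrite ord0m.
Qed.

Definition below (t : mono) (eta : P) := forall m, m \in msupp eta -> leo m t.
Definition sbelow (t : mono) (eta : P) := forall m, m \in msupp eta -> ord m t.

Lemma LT_below eta : below (LT ord eta) eta. Proof. exact: LT_max. Qed.
Lemma below_LT t eta : eta != 0 -> below t eta -> leo (LT ord eta) t.
Proof. by move=> nz h; apply/h/LT_in_msupp. Qed.
Lemma sbelow_LT t eta : eta != 0 -> sbelow t eta -> ord (LT ord eta) t.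
Proof. by move=> nz h; apply/h/LT_in_msupp. Qed.
Lemma LT_unique t eta : t \in msupp eta -> below t eta -> LT ord eta = t.
Proof.
move=> t_in h; have nz : eta != 0.
  by apply: contraTneq t_in => ->; rewrite mcoeff_msupp mcoeff0 eqxx.
by apply: leo_anti; [apply: below_LT | apply: LT_max].
Qed.

Lemma below_trans t t' eta : below t eta -> leo t t' -> below t' eta.
Proof. by move=> h le_t m /h le_m; apply: leo_trans le_m le_t. Qed.
Lemma below0 t : below t (0 : P).
Proof. by move=> m; rewrite mcoeff_msupp mcoeff0 eqxx. Qed.
Lemma belowD t a b : below t a -> below t b -> below t (a + b).
Proof. by move=> ha hb m /msuppD_le; rewrite mem_cat => /orP[/ha|/hb]. Qed.
Lemma belowZ t c a : below t a -> below t (c *: a).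
Proof. by move=> ha m /msuppZ_le; apply: ha. Qed.
Lemma belowN t a : below t a -> below t (- a).
Proof. by move=> h; rewrite -scaleN1r; apply: belowZ. Qed.

Lemma LTN (eta : P) : LT ord (- eta) = LT ord eta.
Proof.
have [->|nz] := eqVneq eta 0; first by rewrite oppr0.
apply: LT_unique; last exact/belowN/LT_below.
by rewrite mcoeff_msupp mcoeffN oppr_eq0 -mcoeff_msupp LT_in_msupp.
Qed.

Lemma LTB_lt (a b : P) : b != 0 -> ord (LT ord a) (LT ord b) -> LT ord (a - b) = LT ord b.
Proof.
move=> nz_b lt_ab; apply: LT_unique; last first.
  by apply: belowD; [apply: below_trans (ord_leo lt_ab) | apply: belowN]; apply: LT_below.
rewrite mcoeff_msupp mcoeffB (memN_msupp_eq0 (m := LT ord b)) ?sub0r ?oppr_eq0.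
  by rewrite -mcoeff_msupp LT_in_msupp.
by apply/negP=> /LT_max /leoNord; rewrite lt_ab.
Qed.

Lemma cancel_below t (a b : P) : below t a -> below t b -> b@_t != 0 ->
  sbelow t (a - (a@_t / b@_t) *: b).
Proof.
move=> ha hb nz m m_in; have le_mt : leo m t.
  exact: (belowD ha (belowN (belowZ (c := a@_t / b@_t) hb)) m_in).
apply: (leo_neq le_mt); apply: contraTneq m_in => ->.
by rewrite mcoeff_msupp mcoeffB mcoeffZ divfK // subrr eqxx.
Qed.

Lemma LT_eq_of_mem_sub (M : E K n -> Prop) (a b : P) : M (a - b) ->
  a != 0 -> b != 0 -> ~ LTset ord M (LT ord a) -> ~ LTset ord M (LT ord b) ->
  LT ord a = LT ord b.
Proof.
move=> M_ab nz_a nz_b nLa nLb.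
have [/eqP|nz_ab] := eqVneq (a - b) 0; first by rewrite subr_eq0 => /eqP ->.
have LT_ab : LTset ord M (LT ord (a - b)) by exists (a - b).
case: (eqVneq (LT ord a) (LT ord b)) => // /ord_total /orP[lt|lt].
  by case: nLb; rewrite -(LTB_lt nz_b lt).
by case: nLa; rewrite -(LTB_lt nz_a lt) -opprB LTN.
Qed.

Definition linext (A : mono -> P) (p : P) : P := \sum_(m <- msupp p) p@_m *: A m.

Lemma linextE A p k : (msize p <= k)%N ->
  linext A p = \sum_(m : 'X_{1..n < k}) p@_m *: A m.
Proof.
move=> le_pk; rewrite /linext (big_mksub 'X_{1..n < k}) ?msupp_uniq //=; last first.
  by move=> x /msize_mdeg_lt /leq_trans; apply.
by rewrite big_rmcond //= => i /memN_msupp_eq0 ->; rewrite scale0r.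
Qed.

Lemma linextD A p q : linext A (p + q) = linext A p + linext A q.
Proof.
pose k := (msize p + msize q + msize (p + q))%N.
have le_p : (msize p <= k)%N by rewrite /k -addnA leq_addr.
have le_q : (msize q <= k)%N by rewrite /k addnAC leq_addl.
have le_pq : (msize (p + q) <= k)%N by rewrite /k leq_addl.
rewrite (linextE A le_p) (linextE A le_q) (linextE A le_pq).
by rewrite -big_split; apply: eq_bigr => i _; rewrite mcoeffD scalerDl.
Qed.

Lemma linextZ A c p : linext A (c *: p) = c *: linext A p.
Proof.
pose k := (msize p + msize (c *: p))%N.
rewrite !(linextE A (k := k)) ?leq_addl ?leq_addr //.
by rewrite scaler_sumr; apply: eq_bigr => i _; rewrite mcoeffZ scalerA.
Qed.

Lemma linext_term p : linext (@term K n) p = p.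
Proof. by rewrite /linext {3}[p]mpolyE. Qed.

Lemma linext_addl A B p : linext (fun m => A m + B m) p = linext A p + linext B p.
Proof. by rewrite /linext -big_split; apply: eq_bigr => m _; rewrite scalerDr. Qed.

Lemma linext_scalel c A p : linext (fun m => c *: A m) p = c *: linext A p.
Proof. by rewrite /linext scaler_sumr; apply: eq_bigr => m _; rewrite !scalerA mulrC. Qed.

Lemma linext0l p : linext (fun _ => 0) p = 0.
Proof. by rewrite /linext big1 // => m _; rewrite scaler0. Qed.

Lemma mcoeff_linext A p u : (linext A p)@_u != 0 ->
  exists2 m, m \in msupp p & (A m)@_u != 0.
Proof.
rewrite /linext raddf_sum /= => nz; apply: NNPP => nex; move/eqP: nz; apply.
rewrite big1_seq // => m /andP[_ m_in]; rewrite mcoeffZ.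
by have [->|nz] := eqVneq (A m)@_u 0; [rewrite mulr0 | case: nex; exists m].
Qed.

Definition act_term (f : S K n) (m : mono) : P :=
  \sum_(g : 'X_{1..n < (mdeg m).+1} | (bmnm g <= m)%MM)
     f (bmnm g) *: term K (m - bmnm g)%MM.

Definition act_term_lower (f : S K n) (m : mono) : P :=
  \sum_(g : 'X_{1..n < (mdeg m).+1} | (bmnm g <= m)%MM && (bmnm g != 0%MM))
     f (bmnm g) *: term K (m - bmnm g)%MM.

Lemma act_linext f p : act f p = linext (act_term f) p. Proof. by []. Qed.

Lemma act_term_split f m : act_term f m = f 0%MM *: term K m + act_term_lower f m.
Proof.
have deg0 : (mdeg (0%MM : mono) < (mdeg m).+1)%N by rewrite mdeg0.
rewrite /act_term (bigD1 (BMultinom deg0)) /=; last by apply/mnm_lepP => i; rewrite mnm0E.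
by rewrite subm0.
Qed.

Lemma act_split f p : act f p = f 0%MM *: p + linext (act_term_lower f) p.
Proof.
transitivity (linext (fun m => f 0%MM *: term K m + act_term_lower f m) p).
  by rewrite act_linext; apply: eq_bigr => m _; rewrite act_term_split.
by rewrite linext_addl linext_scalel linext_term.
Qed.

Lemma actD f (a b : P) : act f (a + b) = act f a + act f b.
Proof. exact: linextD. Qed.
Lemma actZ f c (a : P) : act f (c *: a) = c *: act f a.
Proof. exact: linextZ. Qed.

Definition cst (c : K) : S K n := fun g => if g == 0%MM then c else 0.

Lemma act_cst c (a : P) : act (cst c) a = c *: a.
Proof.
rewrite act_split /cst eqxx -[RHS]addr0; congr (_ + _).
rewrite -(linext0l a) /linext; apply: eq_bigr => m _; congr (_ *: _).
by apply: big1 => g /andP[_ /negbTE ->]; rewrite scale0r.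
Qed.

Lemma mcoeff_act_term_lower f m u : (act_term_lower f m)@_u != 0 -> ord u m.
Proof.
rewrite /act_term_lower raddf_sum /= => nz; apply: NNPP => nlt; move/eqP: nz; apply.
apply: big1 => g /andP[le_gm nz_g]; rewrite mcoeffZ /term mcoeffX.
case: eqP => [e|_]; last by rewrite mulr0.
by case: nlt; rewrite -e; apply: ord_subm.
Qed.

Lemma act_sub_sbelow f t (p : P) : below t p ->
  sbelow t (act f p - f 0%MM *: p).
Proof.
move=> le_p u; rewrite act_split addrC addKr mcoeff_msupp.
case/mcoeff_linext=> m /le_p le_m /mcoeff_act_term_lower lt_um.
exact: ord_leo_trans lt_um le_m.
Qed.

Lemma act_below f t (p : P) : below t p -> below t (act f p).
Proof.
move=> le_p; rewrite -(subrK (f 0%MM *: p) (act f p)).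
apply: belowD; last exact: belowZ.
by move=> u /(act_sub_sbelow (f := f) le_p) /ord_leo.
Qed.

Section Submodule.
Variable M : E K n -> Prop.
Hypothesis M_submod : is_submodule M.

Lemma submod0 : M 0. Proof. by case: M_submod. Qed.
Lemma submodD a b : M a -> M b -> M (a + b).
Proof. by case: M_submod => _ h _; apply: h. Qed.
Lemma submod_act f a : M a -> M (act f a).
Proof. by case: M_submod => _ _ h; apply: h. Qed.
Lemma submodZ c (a : P) : M a -> M (c *: a).
Proof. by move=> h; rewrite -act_cst; apply: submod_act. Qed.
Lemma submodN (a : P) : M a -> M (- a).
Proof. by move=> h; rewrite -scaleN1r; apply: submodZ. Qed.
Lemma submodB (a b : P) : M a -> M b -> M (a - b).
Proof. by move=> ha hb; apply: submodD ha (submodN hb). Qed.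

End Submodule.

Lemma gen_submod (A : E K n -> Prop) : is_submodule (gen A).
Proof.
split=> [M M_submod _ | a b ha hb M M_submod sAM | f a ha M M_submod sAM].
- exact: submod0.
- by apply: submodD => //; [apply: ha | apply: hb].
- by apply: submod_act => //; apply: ha.
Qed.

Lemma addS_intro (M : E K n -> Prop) (xi x : P) c : M (x - c *: xi) -> addS M xi x.
Proof. by move=> h; exists (x - c *: xi), (cst c); rewrite act_cst subrK. Qed.

Lemma addS_incl (M : E K n -> Prop) (xi : P) : subsetE M (addS M xi).
Proof. by move=> x h; apply: (@addS_intro _ _ _ 0); rewrite scale0r subr0. Qed.

Lemma addS_self (M : E K n -> Prop) (xi : P) : is_submodule M -> addS M xi xi.
Proof.
by move=> M_submod; apply: (@addS_intro _ _ _ 1); rewrite scale1r subrr; apply: submod0.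
Qed.

Lemma addS_same (M M' : E K n -> Prop) (xi : P) :
  sameE M M' -> sameE (addS M xi) (addS M' xi).
Proof.
by move=> eMM' x; split=> -[a [f [M_a ->]]]; exists a, f; split=> //; apply/eMM'.
Qed.

Lemma LTset_sub (M M' : E K n -> Prop) t :
  subsetE M M' -> LTset ord M t -> LTset ord M' t.
Proof. by move=> sMM' [e [M_e nz_e <-]]; exists e; split=> //; apply: sMM'. Qed.

Definition reduced (M : E K n -> Prop) (x : P) :=
  forall m, m \in msupp x -> ~ LTset ord M m.

Lemma reduced_mem_eq0 (M : E K n -> Prop) (x : P) : M x -> reduced M x -> x = 0.
Proof.
move=> M_x red; apply/eqP/negP => /negP nz.
by apply: (red _ (LT_in_msupp nz)); exists x.
Qed.

Lemma reducedP (M : E K n -> Prop) (x : P) : reduced M x \/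
  exists v, [/\ v \in msupp x, LTset ord M v &
                forall m, m \in msupp x -> LTset ord M m -> leo m v].
Proof.
rewrite /reduced; elim: (msupp x) => [|y s [red|[v [v_in Mv max_v]]]]; first by left.
- have [My|nMy] := classic (LTset ord M y); [right; exists y | left].
    split=> //; first exact: mem_head.
    by move=> m; rewrite inE => /predU1P[-> _|/red //]; apply: leo_refl.
  by move=> m; rewrite inE => /predU1P[->|/red].
- right; have [[My lt_vy]|nlt] := classic (LTset ord M y /\ ord v y).
    exists y; split=> //; first exact: mem_head.
    move=> m; rewrite inE => /predU1P[-> _|m_in Mm]; first exact: leo_refl.
    exact/ord_leo/(leo_ord_trans (max_v m m_in Mm) lt_vy).
  exists v; split=> //; first by rewrite inE v_in orbT.
  move=> m; rewrite inE => /predU1P[-> My|]; last exact: max_v.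
  by apply: Nord_leo; apply/negP => lt_vy; apply: nlt.
Qed.

Lemma reduce_lead (M : E K n -> Prop) u (xi : P) : is_submodule M ->
  (forall m, m \in msupp xi -> LTset ord M m -> leo m u) ->
  exists xi1, M (xi - xi1) /\
              (forall m, m \in msupp xi1 -> LTset ord M m -> ord m u).
Proof.
move=> M_submod le_u.
have [[u_in [zeta [M_zeta nz_zeta LT_zeta]]]|nu] :=
  classic (u \in msupp xi /\ LTset ord M u); last first.
  exists xi; split=> [|m m_in Mm]; first by rewrite subrr; apply: submod0.
  apply: (leo_neq (le_u m m_in Mm)); apply/eqP => e; apply: nu; by rewrite -e.
have zu : zeta@_u != 0 by rewrite -mcoeff_msupp -LT_zeta LT_in_msupp.
exists (xi - (xi@_u / zeta@_u) *: zeta); split=> [|m m_in Mm].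
  by rewrite subKr; apply: submodZ.
have le_mu : leo m u.
  move/msuppB_le: m_in; rewrite mem_cat => /orP[m_in|/msuppZ_le m_in].
    exact: le_u.
  by rewrite -LT_zeta; apply: LT_max.
apply: (leo_neq le_mu); apply: contraTneq m_in => ->.
by rewrite mcoeff_msupp mcoeffB mcoeffZ divfK // subrr eqxx.
Qed.

Section FiniteLength.
Variable N : E K n -> Prop.
Hypotheses (N_submod : is_submodule N) (N_fin : finite_length N).

Definition N_below (u : mono) : E K n -> Prop := fun x => N x /\ below u x.

Lemma N_below_submod u : is_submodule (N_below u).
Proof.
split=> [|a b [N_a le_a] [N_b le_b]|f a [N_a le_a]].
- by split; [apply: submod0 | apply: below0].
- by split; [apply: submodD | apply: belowD].
- by split; [apply: submod_act | apply: act_below].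
Qed.

Lemma LT_wf : well_founded (fun u v => LTset ord N u /\ ord u v).
Proof.
have [B chain_le] := N_fin; apply: (@bounded_chains_wf _ _ B.+1) => c [//|k] desc.
rewrite ltnS; apply: (chain_le (fun i => N_below (c (k - i).+1))) => i le_ik.
  by split; [apply: N_below_submod | move=> x []].
rewrite -subnSK //; set j := (k - i.+1)%N.
have lt_jk : (j < k)%N by rewrite /j subnS prednK ?subn_gt0 // leq_subr.
have [_ lt_c] := desc j.+1 lt_jk.
have [[eta [N_eta nz_eta LT_eta]] _] := desc j (ltnW lt_jk).
split=> [x [N_x le_x]|same]; first by split=> //; apply: below_trans le_x (ord_leo lt_c).
have : N_below (c j.+1) eta by split=> //; rewrite -LT_eta; apply: LT_below.
move/(proj2 (same eta)) => [_ /(below_LT nz_eta)]; rewrite LT_eta => /leoNord.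
by rewrite lt_c.
Qed.

Lemma LT_ind (Q : mono -> Prop) :
  (forall u, (forall v, LTset ord N v -> ord v u -> Q v) -> Q u) -> forall u, Q u.
Proof.
move=> IH; apply: (well_founded_ind LT_wf) => u IHu.
by apply: IH => v N_v lt_vu; apply: IHu.
Qed.

Lemma LT_min (X : mono -> Prop) : (forall u, X u -> LTset ord N u) ->
  (exists u, X u) -> exists w, X w /\ forall v, X v -> ~~ ord v w.
Proof.
move=> sXN [u]; elim/LT_ind: u => u IH Xu.
have [[v [Xv lt_vu]]|nlt] := classic (exists v, X v /\ ord v u).
  exact: IH v (sXN v Xv) lt_vu Xv.
by exists u; split=> // v Xv; apply/negP => lt_vu; apply: nlt; exists v.
Qed.

Lemma mem_of_sbelow_min (M : E K n -> Prop) t : is_submodule M -> subsetE M N ->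
  (forall eta, N eta -> eta != 0 -> ~ LTset ord M (LT ord eta) ->
     ~~ ord (LT ord eta) t) ->
  forall eta, N eta -> sbelow t eta -> M eta.
Proof.
move=> M_submod sMN t_min.
suff main u eta : N eta -> LT ord eta = u -> sbelow t eta -> M eta.
  by move=> eta N_eta; apply: main.
elim/LT_ind: u eta => u IH eta N_eta LT_eta lt_eta.
have [->|nz_eta] := eqVneq eta 0; first exact: submod0.
have lt_ut : ord u t by rewrite -LT_eta; apply: sbelow_LT.
have [zeta [M_zeta nz_zeta LT_zeta]] : LTset ord M u.
  apply: NNPP => nMu; have := t_min eta N_eta nz_eta; rewrite LT_eta lt_ut.
  by move/(_ nMu).
have zu : zeta@_u != 0 by rewrite -mcoeff_msupp -LT_zeta LT_in_msupp.
set eta' := eta - (eta@_u / zeta@_u) *: zeta.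
rewrite -(subrK ((eta@_u / zeta@_u) *: zeta) eta) -/eta'.
apply: submodD => //; last exact: submodZ.
have lt_eta' : sbelow u eta'.
  by apply: cancel_below => //; [rewrite -LT_eta | rewrite -LT_zeta]; apply: LT_below.
have N_eta' : N eta' by apply: submodB => //; apply: submodZ => //; apply: sMN.
have [->|nz_eta'] := eqVneq eta' 0; first exact: submod0.
apply: (IH _ _ (sbelow_LT nz_eta' lt_eta') _ N_eta' erefl).
  by exists eta'.
by move=> m /lt_eta' lt_mu; apply: ord_trans lt_mu lt_ut.
Qed.

Lemma reduce (M : E K n -> Prop) : is_submodule M -> subsetE M N ->
  forall xi : P, exists xi', M (xi - xi') /\ reduced M xi'.
Proof.
move=> M_submod sMN.
suff main u (xi : P) : (forall m, m \in msupp xi -> LTset ord M m -> leo m u) ->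
    exists xi', M (xi - xi') /\ reduced M xi'.
  move=> xi; have [red|[v [_ _ max_v]]] := reducedP M xi; last exact: main max_v.
  by exists xi; rewrite subrr; split=> //; apply: submod0.
elim/LT_ind: u xi => u IH xi le_u.
have [xi1 [M_xi1 lt_u]] := reduce_lead M_submod le_u.
have [red|[v [v_in Mv max_v]]] := reducedP M xi1; first by exists xi1.
have [xi' [M_xi' red]] := IH v (LTset_sub sMN Mv) (lt_u v v_in Mv) xi1 max_v.
by exists xi'; split=> //; rewrite -(subrKA xi1); apply: submodD.
Qed.

Lemma reduce_notin (M : E K n -> Prop) xi : is_submodule M -> subsetE M N ->
  N xi -> ~ M xi -> exists xi', [/\ M (xi - xi'), N xi', xi' != 0 & reduced M xi'].
Proof.
move=> M_submod sMN N_xi nMxi; have [xi' [M_d red]] := reduce M_submod sMN xi.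
exists xi'; split=> //.
  by rewrite -(subKr xi xi'); apply: submodB => //; apply: sMN.
by apply/eqP => xi'0; apply: nMxi; rewrite -(subr0 xi) -xi'0.
Qed.

Lemma exists_valid_step (M : E K n -> Prop) : is_submodule M -> subsetE M N ->
  ~ sameE M N -> exists xi, valid_step ord N M xi.
Proof.
move=> M_submod sMN nMN.
have [eta [N_eta nM_eta]] : exists eta, N eta /\ ~ M eta.
  apply: NNPP => nex; apply: nMN => x; split; first exact: sMN.
  by move=> N_x; apply: NNPP => nM_x; apply: nex; exists x.
have [eta' [_ N_eta' nz_eta' red]] := reduce_notin M_submod sMN N_eta nM_eta.
pose X u := exists e, [/\ N e, e != 0, ~ LTset ord M (LT ord e) & LT ord e = u].
have [w [[xi [N_xi nz_xi nMxi <-]] xi_min]] :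
    exists w, X w /\ forall v, X v -> ~~ ord v w.
  apply: LT_min; first by move=> u [e [N_e nz_e _ <-]]; exists e.
  by exists (LT ord eta'), eta'; split=> //; apply/red/LT_in_msupp.
by exists xi; split=> // e N_e nz_e nMe; apply: xi_min; exists e.
Qed.

Lemma valid_step_same (M M' : E K n -> Prop) xi :
  sameE M M' -> valid_step ord N M xi -> valid_step ord N M' xi.
Proof.
move=> eMM' [nMN N_xi nz_xi nMxi xi_min].
have sM'M : subsetE M' M by move=> x /(eMM' x).
split=> // [eM'N|M'xi|e N_e nz_e nM'e].
- by apply: nMN => x; split=> [/(eMM' x) /(eM'N x)|/(eM'N x) /(eMM' x)].
- exact/nMxi/(LTset_sub sM'M).
- by apply: xi_min => // Me; apply/nM'e/(LTset_sub _ Me) => x /(eMM' x).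
Qed.

Lemma LT_valid_step_eq (M : E K n -> Prop) xi xi' :
  valid_step ord N M xi -> valid_step ord N M xi' -> LT ord xi = LT ord xi'.
Proof.
move=> [_ N_xi nz_xi nMxi xi_min] [_ N_xi' nz_xi' nMxi' xi'_min].
by apply: leo_anti; apply: Nord_leo; [apply: xi_min | apply: xi'_min].
Qed.

Lemma valid_step_sub_mem (M : E K n -> Prop) xi xi' :
  is_submodule M -> subsetE M N ->
  valid_step ord N M xi -> valid_step ord N M xi' ->
  M (xi' - (xi'@_(LT ord xi) / xi@_(LT ord xi)) *: xi).
Proof.
move=> M_submod sMN v_xi v_xi'; have eLT := LT_valid_step_eq v_xi v_xi'.
case: v_xi v_xi' => _ N_xi nz_xi _ xi_min [_ N_xi' _ _ _].
apply: (mem_of_sbelow_min M_submod sMN xi_min).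
  by apply: submodB => //; apply: submodZ.
apply: cancel_below; [rewrite eLT | | rewrite -mcoeff_msupp LT_in_msupp //].
all: exact: LT_below.
Qed.

Section Step.
Variables (M : E K n -> Prop) (xi : P).
Hypotheses (M_submod : is_submodule M) (sMN : subsetE M N).
Hypothesis xi_valid : valid_step ord N M xi.

Lemma valid_step_notin : ~ M xi.
Proof. by case: xi_valid => _ _ nz_xi nMxi _ M_xi; apply: nMxi; exists xi. Qed.

Lemma mem_act_sub f : M (act f xi - f 0%MM *: xi).
Proof.
case: xi_valid => _ N_xi _ _ xi_min; apply: (mem_of_sbelow_min M_submod sMN xi_min).
  by apply: submodB => //; [apply: submod_act | apply: submodZ].
by apply: act_sub_sbelow; apply: LT_below.
Qed.

Lemma addSP x : addS M xi x <-> exists c, M (x - c *: xi).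
Proof.
split=> [[a [f [M_a ->]]]|[c]]; last exact: addS_intro.
by exists (f 0%MM); rewrite -addrA; apply: submodD => //; apply: mem_act_sub.
Qed.

Lemma addS_coef_unique x c d : M (x - c *: xi) -> M (x - d *: xi) -> c = d.
Proof.
move=> M_c M_d; apply: NNPP => ne; apply: valid_step_notin.
have e : (x - c *: xi) - (x - d *: xi) = (d - c) *: xi.
  by rewrite scalerBl opprB addrC addrA subrK.
have := submodZ M_submod (d - c)^-1 (submodB M_submod M_c M_d).
rewrite e scalerA mulVf ?scale1r // subr_eq0.
by apply/eqP => dc; apply: ne.
Qed.

Lemma addS_coefD (a b : P) c d : M (a - c *: xi) -> M (b - d *: xi) ->
  M ((a + b) - (c + d) *: xi).
Proof. by move=> M_a M_b; rewrite scalerDl opprD addrACA; apply: submodD. Qed.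

Lemma addS_coef_act (a : P) c f : M (a - c *: xi) -> M (act f a - (c * f 0%MM) *: xi).
Proof.
move=> M_a; rewrite -(subrK (c *: xi) a) actD actZ -scalerA -addrA -scalerBr.
by apply: submodD => //; [apply: submod_act | apply: submodZ => //; apply: mem_act_sub].
Qed.

Lemma addS_submod : is_submodule (addS M xi).
Proof.
split=> [|a b /addSP[c M_a] /addSP[d M_b]|f a /addSP[c M_a]]; apply/addSP.
- by exists 0; rewrite scale0r subr0; apply: submod0.
- by exists (c + d); apply: addS_coefD.
- by exists (c * f 0%MM); apply: addS_coef_act.
Qed.

Lemma addS_subN : subsetE (addS M xi) N.
Proof.
case: xi_valid => _ N_xi _ _ _ x [a [f [M_a ->]]].
by apply: submodD => //; [apply: sMN | apply: submod_act].
Qed.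

Definition addS_coef (x : P) : K :=
  epsilon (inhabits 0) (fun c => M (x - c *: xi)).

Lemma addS_coef_eq (x : P) c : M (x - c *: xi) -> addS_coef x = c.
Proof.
move=> M_c; apply: addS_coef_unique (M_c).
exact: (epsilon_spec (inhabits 0) (fun c => M (x - c *: xi)) (ex_intro _ c M_c)).
Qed.

Lemma addS_coefP (x : P) : addS M xi x -> M (x - addS_coef x *: xi).
Proof. by case/addSP=> c M_c; rewrite (addS_coef_eq M_c). Qed.

Lemma addS_quot_K : quot_iso_K (addS M xi) M.
Proof.
exists addS_coef; split=> [a b M_a M_b|f a M_a|c|a M_a].
- by apply: addS_coef_eq; apply: addS_coefD; apply: addS_coefP.
- by rewrite mulrC; apply: addS_coef_eq; apply: addS_coef_act; apply: addS_coefP.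
- exists (c *: xi); have M_0 : M (c *: xi - c *: xi) by rewrite subrr; apply: submod0.
  by split; [apply: addS_intro M_0 | apply: addS_coef_eq].
- split=> [coef0|M_a']; last by apply: addS_coef_eq; rewrite scale0r subr0.
  by have := addS_coefP M_a; rewrite coef0 scale0r subr0.
Qed.

End Step.

Lemma exists_reduced_valid_step (M : E K n -> Prop) :
  is_submodule M -> subsetE M N ->
  ~ sameE M N -> exists xi, valid_step ord N M xi /\ reduced M xi.
Proof.
move=> M_submod sMN nMN; have [xi v_xi] := exists_valid_step M_submod sMN nMN.
have nMxi := valid_step_notin v_xi.
case: v_xi => _ N_xi nz_xi nMLT xi_min.
have [xi' [M_d N_xi' nz_xi' red]] := reduce_notin M_submod sMN N_xi nMxi.
have eLT := LT_eq_of_mem_sub M_d nz_xi nz_xi' nMLT (red _ (LT_in_msupp nz_xi')).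
by exists xi'; split=> //; split=> //; rewrite -eLT.
Qed.

Lemma addS_valid_sub (M : E K n -> Prop) xi xi' :
  is_submodule M -> subsetE M N ->
  valid_step ord N M xi -> valid_step ord N M xi' -> subsetE (addS M xi') (addS M xi).
Proof.
move=> M_submod sMN v_xi v_xi' x /(addSP M_submod sMN v_xi') [d M_d].
have M_c := valid_step_sub_mem M_submod sMN v_xi v_xi'.
apply: (@addS_intro _ _ _ (d * (xi'@_(LT ord xi) / xi@_(LT ord xi)))).
rewrite -scalerA -(subrKA (d *: xi')) -scalerBr.
by apply: submodD => //; apply: submodZ.
Qed.

Lemma valid_step_LT_lt (M : E K n -> Prop) xi xi' : is_submodule M ->
  valid_step ord N M xi -> valid_step ord N (addS M xi) xi' ->
  ord (LT ord xi) (LT ord xi').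
Proof.
move=> M_submod [_ _ nz_xi _ xi_min] [_ N_xi' nz_xi' nMxi' _].
have le_LT : leo (LT ord xi) (LT ord xi').
  by apply/Nord_leo/xi_min => // /(LTset_sub (@addS_incl M xi)).
apply: (leo_neq le_LT); apply/eqP => eLT; apply: nMxi'; rewrite -eLT.
by exists xi; split=> //; apply: addS_self.
Qed.

Lemma reduced_valid_step_unique (M : E K n -> Prop) xi xi' :
  is_submodule M -> subsetE M N ->
  valid_step ord N M xi -> reduced M xi -> valid_step ord N M xi' -> reduced M xi' ->
  exists c : K, c != 0 /\ xi' = c *: xi.
Proof.
move=> M_submod sMN v_xi red v_xi' red'.
have M_d := valid_step_sub_mem M_submod sMN v_xi v_xi'.
set c := _ / _ in M_d.
have /eqP : xi' - c *: xi = 0.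
  apply: (reduced_mem_eq0 M_d) => m /msuppB_le; rewrite mem_cat.
  by case/orP=> [/red' | /msuppZ_le /red].
rewrite subr_eq0 => /eqP exi'; exists c; split=> //.
by apply/eqP => c0; case: v_xi' => _ _; rewrite exi' c0 scale0r eqxx.
Qed.

Lemma T1_submod : is_submodule (T1 N). Proof. exact: gen_submod. Qed.
Lemma T1_subN : subsetE (T1 N) N. Proof. by move=> x; apply => // y []. Qed.

Lemma chain_submod s : valid_run ord N s -> forall i, (i <= size s)%N ->
  is_submodule (chain N s i) /\ subsetE (chain N s i) N.
Proof.
move=> run; elim=> [|i IH] lt_is; first by split; [apply: T1_submod | apply: T1_subN].
have [M_submod sMN] := IH (ltnW lt_is).
by split; [apply: addS_submod | apply: addS_subN] => //; apply: run.
Qed.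

Lemma chain_rcons s x i : (i <= size s)%N -> chain N (rcons s x) i = chain N s i.
Proof. by elim: i => //= i IH lt_is; rewrite IH ?(ltnW lt_is) // nth_rcons lt_is. Qed.

Lemma valid_run_rcons s x : valid_run ord N s ->
  valid_step ord N (chain N s (size s)) x -> valid_run ord N (rcons s x).
Proof.
move=> run v_x i; rewrite size_rcons ltnS leq_eqVlt => /predU1P[->|lt_is].
  by rewrite chain_rcons // nth_rcons ltnn eqxx.
by rewrite chain_rcons ?(ltnW lt_is) // nth_rcons lt_is; apply: run.
Qed.

Lemma valid_run_rcons_last s x : valid_run ord N (rcons s x) ->
  valid_step ord N (chain N s (size s)) x.
Proof.
by move/(_ (size s)); rewrite size_rcons ltnSn chain_rcons // nth_rcons ltnn eqxx; apply.
Qed.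

Lemma valid_run_size_bounded : exists B, forall s, valid_run ord N s -> (size s <= B)%N.
Proof.
have [B chain_le] := N_fin; exists B => s run.
apply: (chain_le (chain N s)) => i lt_is; first exact: chain_submod.
have [M_submod sMN] := chain_submod run (ltnW lt_is).
split=> [|same]; first exact: addS_incl.
by apply: (valid_step_notin (run i lt_is)); apply/(same _)/addS_self.
Qed.

Lemma valid_run_extend s : valid_run ord N s -> ~ sameE (chain N s (size s)) N ->
  exists xi, valid_run ord N (rcons s xi).
Proof.
move=> run nMN; have [M_submod sMN] := chain_submod run (leqnn _).
have [xi v_xi] := exists_valid_step M_submod sMN nMN.
by exists xi; apply: valid_run_rcons.
Qed.

Lemma valid_run_LT_lt s i : valid_run ord N s -> (i.+1 < size s)%N ->
  ord (LT ord (nth 0 s i)) (LT ord (nth 0 s i.+1)).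
Proof.
move=> run lt_is; have [M_submod _] := chain_submod run (ltnW (ltnW lt_is)).
exact: valid_step_LT_lt M_submod (run i (ltnW lt_is)) (run i.+1 lt_is).
Qed.

Lemma chain_independent s t i : valid_run ord N s -> valid_run ord N t ->
  (i <= size s)%N -> (i <= size t)%N -> sameE (chain N s i) (chain N t i).
Proof.
move=> run_s run_t; elim: i => [|i IH] lt_is lt_it; first by [].
have e := IH (ltnW lt_is) (ltnW lt_it).
have [M_submod sMN] := chain_submod run_s (ltnW lt_is).
have v_s := run_s i lt_is.
have v_t := valid_step_same (fun x => iff_sym (e x)) (run_t i lt_it).
move=> x; apply: (iff_trans _ (addS_same _ e x)).
by split; apply: addS_valid_sub.
Qed.

End FiniteLength.

End TermOrder.

Theorem theorem3p9 (K : fieldType) (n : nat) (ord : rel 'X_{1..n})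
    (N : E K n -> Prop) :
  term_order ord -> is_submodule N -> finite_length N ->
  (* the construction terminates: runs have bounded length ... *)
  (exists B : nat, forall s, valid_run ord N s -> (size s <= B)%N) /\
  (* ... and a run can be continued as long as N_k <> N *)
  (forall s, valid_run ord N s -> ~ sameE (chain N s (size s)) N ->
     exists xi, valid_run ord N (rcons s xi)) /\
  (* it is a chain of S-submodules of N *)
  (forall s, valid_run ord N s ->
     (forall i, (i <= size s)%N ->
        is_submodule (chain N s i) /\ subsetE (chain N s i) N) /\
     (forall i, (i < size s)%N -> subsetE (chain N s i) (chain N s i.+1))) /\
  (* (1) N_i / N_(i-1) ~= K *)
  (forall s, valid_run ord N s -> forall i, (i < size s)%N ->
     quot_iso_K (chain N s i.+1) (chain N s i)) /\
  (* (2) LT(xi_1) < LT(xi_2) < ... *)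
  (forall s, valid_run ord N s -> forall i, (i.+1 < size s)%N ->
     ord (LT ord (nth 0 s i)) (LT ord (nth 0 s i.+1))) /\
  (* (3) N_i does not depend on the choices *)
  (forall s t, valid_run ord N s -> valid_run ord N t ->
     forall i, (i <= size s)%N -> (i <= size t)%N ->
     sameE (chain N s i) (chain N t i)) /\
  (* (4) a choice with no term in LT(N_(i-1)) exists, unique up to K^x *)
  (forall s, valid_run ord N s -> ~ sameE (chain N s (size s)) N ->
     (exists xi, valid_run ord N (rcons s xi) /\
        forall m, m \in msupp xi -> ~ LTset ord (chain N s (size s)) m) /\
     (forall xi xi',
        valid_run ord N (rcons s xi) ->
        (forall m, m \in msupp xi -> ~ LTset ord (chain N s (size s)) m) ->
        valid_run ord N (rcons s xi') ->
        (forall m, m \in msupp xi' -> ~ LTset ord (chain N s (size s)) m) ->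
        exists c : K, c != 0 /\ xi' = c *: xi)).
Proof.
move=> ord_term N_submod N_fin.
have chainP := chain_submod ord_term N_submod N_fin.
split; first exact: (valid_run_size_bounded ord_term N_submod N_fin).
split; first by move=> s; apply: (valid_run_extend ord_term N_submod N_fin).
split; first by move=> s run; split=> [|i _]; [apply: chainP | apply: addS_incl].
split.
  move=> s run i lt_is; have [M_submod sMN] := chainP s run i (ltnW lt_is).
  exact: (addS_quot_K ord_term N_submod N_fin M_submod sMN (run i lt_is)).
split; first by move=> s run i; apply: (valid_run_LT_lt ord_term N_submod N_fin).
split.
  by move=> s t run_s run_t i; apply: (chain_independent ord_term N_submod N_fin).
move=> s run nMN; have [M_submod sMN] := chainP s run _ (leqnn _).
split=> [|xi xi' /valid_run_rcons_last v_xi red /valid_run_rcons_last v_xi' red'].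
  have [xi [v_xi red]] :=
    exists_reduced_valid_step ord_term N_submod N_fin M_submod sMN nMN.
  by exists xi; split=> //; apply: valid_run_rcons.
exact: (reduced_valid_step_unique ord_term N_submod N_fin M_submod sMN
          v_xi red v_xi' red').
Qed.
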